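(* For $i=1,2$ let $\alpha_i\in[-1,1]$ and let $f_{\alpha_i}=h_{\alpha_i}+\overline{g_{\alpha_i}}\in S_H$ with $h_{\alpha_i}(z)+g_{\alpha_i}(z)=\dfrac{z(1-\alpha_i z)}{1-z^2}$. Suppose the dilatation of $f_{\alpha_1}$ is $\omega_1(z)=-z$ and the dilatation of $f_{\alpha_2}$ is $\omega_2(z)=z$. If $\alpha_1\ge\alpha_2$, then for every $0\le t\le1$ the map $f=tf_{\alpha_1}+(1-t)f_{\alpha_2}$ belongs to $S_H$ and maps $E$ onto a domain convex in the direction of the imaginary axis.
   Context: $E=\{z\in\mathbb{C}:|z|<1\}$. For a harmonic mapping $f=h+\overline{g}$ on $E$ with $h,g$ analytic, the dilatation is $\omega=g'/h'$; $f$ is locally univalent and sense-preserving iff $h'\ne0$ and $|\omega|<1$ in $E$. $S_H$ denotes the class of harmonic, univalent, sense-preserving mappings $f=h+\overline{g}$ of $E$ normalized by $f(0)=0$, $f_z(0)=1$. A domain $\Omega$ is convex in the direction of the imaginary axis if every line parallel to the imaginary axis has connected or empty intersection with $\Omega$. *)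

From Stdlib Require Import Reals.
Open Scope R_scope.

Definition Cpx : Type := (R * R)%type.
Definition Re (z : Cpx) : R := fst z.
Definition Im (z : Cpx) : R := snd z.
Definition RtoC (a : R) : Cpx := (a, 0).
Definition C0 : Cpx := (0, 0).
Definition C1 : Cpx := (1, 0).
Definition Cadd (z w : Cpx) : Cpx := (fst z + fst w, snd z + snd w).
Definition Copp (z : Cpx) : Cpx := (- fst z, - snd z).
Definition Csub (z w : Cpx) : Cpx := Cadd z (Copp w).
Definition Cmul (z w : Cpx) : Cpx :=
  (fst z * fst w - snd z * snd w, fst z * snd w + snd z * fst w).
Definition Cconj (z : Cpx) : Cpx := (fst z, - snd z).
Definition Cnorm (z : Cpx) : R := sqrt (fst z * fst z + snd z * snd z).
Definition Cinv (z : Cpx) : Cpx :=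
  let d := fst z * fst z + snd z * snd z in (fst z / d, - snd z / d).
Definition Cdiv (z w : Cpx) : Cpx := Cmul z (Cinv w).
Definition Cscal (a : R) (z : Cpx) : Cpx := (a * fst z, a * snd z).

Definition inE (z : Cpx) : Prop := Cnorm z < 1.

Definition is_cderiv (f : Cpx -> Cpx) (z l : Cpx) : Prop :=
  forall eps : R, 0 < eps -> exists delta : R, 0 < delta /\
    forall w : Cpx, 0 < Cnorm (Csub w z) < delta ->
      Cnorm (Csub (Cdiv (Csub (f w) (f z)) (Csub w z)) l) < eps.

Definition analytic_on_E (f : Cpx -> Cpx) : Prop :=
  forall z, inE z -> exists l, is_cderiv f z l.

Definition harm (h g : Cpx -> Cpx) : Cpx -> Cpx := fun z => Cadd (h z) (Cconj (g z)).

Definition in_SH (h g : Cpx -> Cpx) : Prop :=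
  analytic_on_E h /\ analytic_on_E g /\
  (forall z w, inE z -> inE w -> harm h g z = harm h g w -> z = w) /\
  (forall z a b, inE z -> is_cderiv h z a -> is_cderiv g z b ->
      a <> C0 /\ Cnorm (Cdiv b a) < 1) /\
  harm h g C0 = C0 /\
  is_cderiv h C0 C1.

Definition has_dilatation (h g : Cpx -> Cpx) (omega : Cpx -> Cpx) : Prop :=
  forall z a b, inE z -> is_cderiv h z a -> is_cderiv g z b ->
    a <> C0 /\ Cdiv b a = omega z.

(* A set D of the plane is convex in the direction of the imaginary axis:
   its intersection with every vertical line is connected (= an interval,
   i.e. contains the segment between any two of its points). *)
Definition convex_imag_dir (D : Cpx -> Prop) : Prop :=
  forall w1 w2 : Cpx, D w1 -> D w2 -> Re w1 = Re w2 ->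
    forall s : R, 0 <= s <= 1 -> D (Re w1, s * Im w1 + (1 - s) * Im w2).

Definition image_E (f : Cpx -> Cpx) : Cpx -> Prop := fun w => exists z, inE z /\ f z = w.

Definition shear_fun (alpha : R) (z : Cpx) : Cpx :=
  Cdiv (Cmul z (Csub C1 (Cmul (RtoC alpha) z))) (Csub C1 (Cmul z z)).

(* Write h, g for the combined analytic parts, F = h + g, G = h - g,
   so that h + conj g = (Re F, Im G).
   1. By linearity F is the shear function of beta = t alpha1 + (1-t) alpha2.
   2. Differentiating h_i + g_i = shear_fun alpha_i gives
      h_i'(1 + omega_i) = q_{alpha_i}/(1-z^2)^2, q_a(z) = 1 - 2 a z + z^2; an
      explicit polynomial inequality then shows |g'/h'| < 1 for the combination.
   3. Shear construction: the Cayley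
      transform zeta = (1+z)/(1-z) parametrizes each level set {Re F = c} by a
      real parameter x along which Im F increases.  Since Re(G'/F') > 0 (a
      restatement of |g'/h'| < 1), Im G is then locally, hence globally,
      strictly increasing along the level set; this gives injectivity of
      (Re F, Im G), and the intermediate value theorem gives convexity in the
      imaginary direction. *)

From Stdlib Require Import Reals Lra Psatz Classical.
From Coquelicot Require Import Coquelicot.
From Pilot Require Import Defs.
Open Scope R_scope.
Local Notation RtoC := Complex.RtoC.

Lemma Cadd_C z w : Cadd z w = Cplus z w. Proof. reflexivity. Qed.
Lemma Cmul_C z w : Cmul z w = Cmult z w. Proof. reflexivity. Qed.
Lemma Copp_C z : Defs.Copp z = Complex.Copp z. Proof. reflexivity. Qed.
Lemma Csub_C z w : Csub z w = Cminus z w. Proof. reflexivity. Qed.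
Lemma Cinv_C z : Defs.Cinv z = Complex.Cinv z.
Proof. destruct z as [x y]; unfold Defs.Cinv, Complex.Cinv; simpl; f_equal; f_equal; ring. Qed.
Lemma Cdiv_C z w : Defs.Cdiv z w = Complex.Cdiv z w.
Proof. unfold Defs.Cdiv, Complex.Cdiv. rewrite Cinv_C. reflexivity. Qed.
Lemma Cnorm_C z : Cnorm z = Cmod z.
Proof. destruct z as [x y]; unfold Cnorm, Cmod; simpl; f_equal; ring. Qed.
Lemma RtoC_C a : Defs.RtoC a = RtoC a. Proof. reflexivity. Qed.
Lemma Cscal_C a z : Cscal a z = Cmult (RtoC a) z.
Proof. destruct z as [x y]; unfold Cscal, Cmult; simpl; f_equal; ring. Qed.
Lemma Cconj_C z : Defs.Cconj z = Complex.Cconj z. Proof. reflexivity. Qed.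
Lemma C0_C : Defs.C0 = RtoC 0. Proof. reflexivity. Qed.
Lemma C1_C : Defs.C1 = RtoC 1. Proof. reflexivity. Qed.

Ltac to_C_goal := repeat match goal with
  | |- context[Cadd ?a ?b] => rewrite (Cadd_C a b)
  | |- context[Cmul ?a ?b] => rewrite (Cmul_C a b)
  | |- context[Defs.Copp ?a] => rewrite (Copp_C a)
  | |- context[Csub ?a ?b] => rewrite (Csub_C a b)
  | |- context[Defs.Cdiv ?a ?b] => rewrite (Cdiv_C a b)
  | |- context[Defs.Cinv ?a] => rewrite (Cinv_C a)
  | |- context[Cnorm ?a] => rewrite (Cnorm_C a)
  | |- context[Defs.RtoC ?a] => rewrite (RtoC_C a)
  | |- context[Cscal ?a ?b] => rewrite (Cscal_C a b)
  | |- context[Defs.Cconj ?a] => rewrite (Cconj_C a)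
  | |- context[Defs.C0] => rewrite C0_C
  | |- context[Defs.C1] => rewrite C1_C
  end.
Ltac to_C_hyp := repeat match goal with
  | H : context[Cadd ?a ?b] |- _ => rewrite (Cadd_C a b) in H
  | H : context[Cmul ?a ?b] |- _ => rewrite (Cmul_C a b) in H
  | H : context[Defs.Copp ?a] |- _ => rewrite (Copp_C a) in H
  | H : context[Csub ?a ?b] |- _ => rewrite (Csub_C a b) in H
  | H : context[Defs.Cdiv ?a ?b] |- _ => rewrite (Cdiv_C a b) in H
  | H : context[Defs.Cinv ?a] |- _ => rewrite (Cinv_C a) in H
  | H : context[Cnorm ?a] |- _ => rewrite (Cnorm_C a) in H
  | H : context[Defs.RtoC ?a] |- _ => rewrite (RtoC_C a) in H
  | H : context[Cscal ?a ?b] |- _ => rewrite (Cscal_C a b) in H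
  | H : context[Defs.Cconj ?a] |- _ => rewrite (Cconj_C a) in H
  | H : context[Defs.C0] |- _ => rewrite C0_C in H
  | H : context[Defs.C1] |- _ => rewrite C1_C in H
  end.
Ltac to_C := to_C_goal; to_C_hyp.

Ltac cfield := change Cpx with C in *; cbv beta;
  repeat progress rewrite ?RtoC_mult, ?RtoC_plus, ?RtoC_minus, ?RtoC_opp;
  match goal with |- @eq _ ?a ?b => change (@eq C a b); field; cbv beta end.
Ltac cring := cbv beta; apply injective_projections; simpl; ring.

Lemma inE_Cmod z : inE z <-> Cmod z < 1.
Proof. unfold inE. rewrite Cnorm_C. tauto. Qed.

Lemma Cmod_lt1_sq x y : Cmod (x, y) < 1 -> x*x + y*y < 1.
Proof.
  unfold Cmod; cbn [fst snd]. intros H.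
  destruct (Rlt_or_le (x*x+y*y) 1) as [h|h]; auto. exfalso.
  assert (1 <= sqrt (x ^ 2 + y ^ 2)) by (rewrite <- sqrt_1; apply sqrt_le_1_alt; nra).
  lra.
Qed.

Lemma Cmod_le_sq (u v : C) :
  fst u * fst u + snd u * snd u <= fst v * fst v + snd v * snd v -> Cmod u <= Cmod v.
Proof. intros H. unfold Cmod. apply sqrt_le_1_alt. simpl. lra. Qed.

Lemma Cmod_lt_sq (u v : C) :
  fst u * fst u + snd u * snd u < fst v * fst v + snd v * snd v -> Cmod u < Cmod v.
Proof. intros H. unfold Cmod. apply sqrt_lt_1_alt. split; [nra|simpl; lra]. Qed.

Lemma Rabs_im_le_Cmod (u : C) : Rabs (snd u) <= Cmod u.
Proof. pose proof (Rmax_Cmod u). pose proof (Rmax_r (Rabs (fst u)) (Rabs (snd u))). lra. Qed.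

Lemma Cmod_le_abs_sum (u : C) : Cmod u <= Rabs (fst u) + Rabs (snd u).
Proof.
  pose proof (Rabs_pos (fst u)); pose proof (Rabs_pos (snd u)).
  unfold Cmod. rewrite <- (sqrt_square (Rabs (fst u) + Rabs (snd u))) by lra.
  apply sqrt_le_1_alt. rewrite <- !Rsqr_pow2, (Rsqr_abs (fst u)), (Rsqr_abs (snd u)).
  unfold Rsqr. nra.
Qed.

Lemma Cmod_pure_imag v : Cmod (0, v) = Rabs v.
Proof. unfold Cmod. simpl. rewrite <- sqrt_Rsqr_abs. f_equal. unfold Rsqr. ring. Qed.

Lemma RtoC_neq_0 t : t <> 0 -> RtoC t <> RtoC 0.
Proof. intros H E. apply H. injection E. auto. Qed.

Lemma Cminus_neq_0 z w : z <> w -> Cminus z w <> RtoC 0.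
Proof. intros H E. apply H. apply injective_projections; injection E; simpl; lra. Qed.

Lemma one_minus_neq_0 z : Cmod z < 1 -> Cminus (RtoC 1) z <> RtoC 0.
Proof.
  intros H E. assert (z = RtoC 1) by (apply injective_projections; injection E; simpl; lra).
  subst. rewrite Cmod_1 in H. lra.
Qed.

Lemma one_plus_neq_0 z : Cmod z < 1 -> Cplus (RtoC 1) z <> RtoC 0.
Proof.
  intros H E. assert (z = Complex.Copp (RtoC 1)) by (apply injective_projections; injection E; simpl; lra).
  subst. rewrite Cmod_opp, Cmod_1 in H. lra.
Qed.

Lemma one_minus_sq_neq_0 z : Cmod z < 1 -> Cminus (RtoC 1) (Cmult z z) <> RtoC 0.
Proof.
  intros H.
  replace (Cminus (RtoC 1) (Cmult z z))
    with (Cmult (Cminus (RtoC 1) z) (Cplus (RtoC 1) z)) by cring.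
  apply Cmult_neq_0; [apply one_minus_neq_0 | apply one_plus_neq_0]; auto.
Qed.

Notation Cderive f z l := (@is_derive C_AbsRing (AbsRing_NormedModule C_AbsRing) f z l).

Lemma diff_quot_err (a b w z l : C) : Cminus w z <> RtoC 0 ->
  Cminus (Complex.Cdiv (Cminus a b) (Cminus w z)) l
  = Complex.Cdiv (Cminus (Cminus a b) (Cmult (Cminus w z) l)) (Cminus w z).
Proof. intros. field. auto. Qed.

Lemma cderiv_Cderive f z l : is_cderiv f z l -> Cderive f z l.
Proof.
  intros H. split; [apply is_linear_scal_l|].
  intros x Hx. apply (@is_filter_lim_locally_unique C_AbsRing (AbsRing_NormedModule C_AbsRing)) in Hx.
  subst x. intros eps. destruct (H eps (cond_pos eps)) as [d [Hd Hd']].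
  exists (mkposreal _ Hd). intros y Hy.
  change (Cmod (Cminus y z) < d) in Hy.
  change (Cmod (Cminus (Cminus (f y) (f z)) (Cmult (Cminus y z) l)) <= eps * Cmod (Cminus y z)).
  destruct (classic (y = z)) as [->|Hne].
  - replace (Cminus (Cminus (f z) (f z)) (Cmult (Cminus z z) l)) with (RtoC 0) by cring.
    rewrite Cmod_0. pose proof (Cmod_ge_0 (Cminus z z)). pose proof (cond_pos eps). nra.
  - pose proof (Cminus_neq_0 _ _ Hne) as Hn.
    assert (Hpos : 0 < Cmod (Cminus y z)) by (apply Cmod_gt_0; auto).
    specialize (Hd' y). to_C. specialize (Hd' (conj Hpos Hy)).
    rewrite diff_quot_err, Cmod_div in Hd' by auto.
    apply Rlt_le. apply (Rmult_lt_compat_r (Cmod (Cminus y z))) in Hd'; auto.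
    unfold Rdiv in Hd'. rewrite Rmult_assoc, Rinv_l in Hd' by lra. lra.
Qed.

Lemma Cderive_cderiv f z l : Cderive f z l -> is_cderiv f z l.
Proof.
  intros [_ H] eps Heps.
  destruct (H z (fun P HP => HP) (mkposreal (eps/2) ltac:(lra))) as [d Hd].
  exists d. split; [apply cond_pos|]. intros w [Hw1 Hw2].
  specialize (Hd w).
  change (Cmod (Cminus w z) < d -> Cmod (Cminus (Cminus (f w) (f z)) (Cmult (Cminus w z) l))
          <= eps/2 * Cmod (Cminus w z)) in Hd.
  to_C. specialize (Hd Hw2).
  assert (Hn : Cminus w z <> RtoC 0) by (apply Cmod_gt_0; auto).
  rewrite diff_quot_err, Cmod_div by auto.
  apply (Rmult_lt_reg_r (Cmod (Cminus w z))); auto.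
  unfold Rdiv. rewrite Rmult_assoc, Rinv_l; [nra|lra].
Qed.

(* Complex derivatives are unique: two limits of the same difference quotient
   are closer than any epsilon. *)
Lemma cderiv_unique f z l1 l2 : is_cderiv f z l1 -> is_cderiv f z l2 -> l1 = l2.
Proof.
  intros H1 H2. apply NNPP. intro Hne.
  pose proof (Cminus_neq_0 _ _ Hne) as Hn. apply Cmod_gt_0 in Hn.
  set (e := Cmod (Cminus l1 l2) / 2).
  destruct (H1 e ltac:(unfold e; lra)) as [d1 [Hd1 K1]].
  destruct (H2 e ltac:(unfold e; lra)) as [d2 [Hd2 K2]].
  set (r := Rmin d1 d2 / 2).
  assert (Hr : 0 < r) by (unfold r; apply Rmin_case; lra).
  assert (Hr1 : r < d1) by (unfold r; pose proof (Rmin_l d1 d2); lra).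
  assert (Hr2 : r < d2) by (unfold r; pose proof (Rmin_r d1 d2); lra).
  set (w := Cplus z (RtoC r)).
  assert (Hw : Cnorm (Csub w z) = r).
  { rewrite Cnorm_C. unfold w. replace (Csub (Cplus z (RtoC r)) z) with (RtoC r) by cring.
    rewrite Cmod_R. apply Rabs_right. lra. }
  specialize (K1 w). specialize (K2 w). rewrite Hw in K1, K2.
  specialize (K1 (conj Hr Hr1)). specialize (K2 (conj Hr Hr2)).
  revert K1 K2. set (Q := Cdiv (Csub (f w) (f z)) (Csub w z)). to_C. intros K1 K2.
  assert (E : Cminus l1 l2 = Cplus (Cminus Q l2) (Complex.Copp (Cminus Q l1))) by cring.
  pose proof (Cmod_triangle (Cminus Q l2) (Complex.Copp (Cminus Q l1))) as T.
  rewrite Cmod_opp, <- E in T. unfold e in *. lra.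
Qed.

Lemma Cderive_unique f z l1 l2 : Cderive f z l1 -> Cderive f z l2 -> l1 = l2.
Proof. intros H1 H2. apply (cderiv_unique f z); apply Cderive_cderiv; auto. Qed.

Lemma Cderive_plus f g z a b :
  Cderive f z a -> Cderive g z b -> Cderive (fun w => Cplus (f w) (g w)) z (Cplus a b).
Proof. exact (is_derive_plus f g z a b). Qed.

Lemma Cderive_minus f g z a b :
  Cderive f z a -> Cderive g z b -> Cderive (fun w => Cminus (f w) (g w)) z (Cminus a b).
Proof. exact (is_derive_minus f g z a b). Qed.

Lemma Cderive_mult f g z a b : Cderive f z a -> Cderive g z b ->
  Cderive (fun w => Cmult (f w) (g w)) z (Cplus (Cmult a (g z)) (Cmult (f z) b)).
Proof. intros Ha Hb. exact (is_derive_mult f g z a b Ha Hb Cmult_comm). Qed.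

Lemma Cderive_const (c z : C) : Cderive (fun _ => c) z (RtoC 0).
Proof. exact (@is_derive_const C_AbsRing (AbsRing_NormedModule C_AbsRing) c z). Qed.

Lemma Cderive_id (z : C) : Cderive (fun w => w) z (RtoC 1).
Proof. exact (is_derive_id z). Qed.

Lemma Cderive_eq f z l l' : Cderive f z l -> l = l' -> Cderive f z l'.
Proof. intros H ->; exact H. Qed.

Lemma Cderive_scal f z a (t : R) :
  Cderive f z a -> Cderive (fun w => Cscal t (f w)) z (Cmult (RtoC t) a).
Proof.
  intros Ha. eapply is_derive_ext. { intro w. symmetry. apply Cscal_C. }
  eapply Cderive_eq; [apply Cderive_mult; [apply Cderive_const | exact Ha] | cring].
Qed.

Lemma cderiv_lincomb f g z a b t s : is_cderiv f z a -> is_cderiv g z b ->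
  is_cderiv (fun w => Cadd (Cscal t (f w)) (Cscal s (g w))) z
            (Cplus (Cmult (RtoC t) a) (Cmult (RtoC s) b)).
Proof.
  intros Ha Hb. apply cderiv_Cderive in Ha, Hb. apply Cderive_cderiv.
  apply (Cderive_plus (fun w => Cscal t (f w)) (fun w => Cscal s (g w))); apply Cderive_scal; auto.
Qed.

Lemma Cderive_ext_E f g z l :
  inE z -> (forall w, inE w -> f w = g w) -> Cderive f z l -> Cderive g z l.
Proof.
  intros Hz Hfg. apply is_derive_ext_loc. rewrite inE_Cmod in Hz.
  exists (mkposreal (1 - Cmod z) ltac:(lra)). intros y Hy. apply Hfg. rewrite inE_Cmod.
  change (Cmod (Cminus y z) < 1 - Cmod z) in Hy.
  replace y with (Cplus z (Cminus y z)) by cring.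
  eapply Rle_lt_trans; [apply Cmod_triangle | lra].
Qed.

Lemma cderiv_taylor F z l eps : is_cderiv F z l -> 0 < eps -> exists r, 0 < r /\
  forall w, Cmod (Cminus w z) < r ->
    Cmod (Cminus (Cminus (F w) (F z)) (Cmult l (Cminus w z))) <= eps * Cmod (Cminus w z).
Proof.
  intros H He. destruct (H eps He) as [r [Hr Hw]]. exists r. split; auto.
  intros w Hwz. destruct (classic (w = z)) as [->|Hne].
  - replace (Cminus (Cminus (F z) (F z)) (Cmult l (Cminus z z))) with (RtoC 0) by cring.
    rewrite Cmod_0. apply Rmult_le_pos; [lra|apply Cmod_ge_0].
  - pose proof (Cminus_neq_0 _ _ Hne) as Hdz.
    assert (Hpos : 0 < Cmod (Cminus w z)) by (apply Cmod_gt_0; auto).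
    specialize (Hw w). to_C. specialize (Hw (conj Hpos Hwz)).
    rewrite diff_quot_err, Cmod_div in Hw by auto.
    rewrite Cmult_comm. apply Rlt_le.
    apply (Rmult_lt_compat_r (Cmod (Cminus w z))) in Hw; auto.
    unfold Rdiv in Hw. rewrite Rmult_assoc, Rinv_l in Hw by lra. lra.
Qed.

Lemma cderiv_continuous F z l : is_cderiv F z l -> forall eps, 0 < eps -> exists r, 0 < r /\
  forall w, Cmod (Cminus w z) < r -> Cmod (Cminus (F w) (F z)) < eps.
Proof.
  intros H eps He. destruct (cderiv_taylor F z l 1 H ltac:(lra)) as [r [Hr Hw]].
  pose proof (Cmod_ge_0 l).
  set (r' := eps / (Cmod l + 1)).
  assert (Hr' : 0 < r') by (apply Rdiv_lt_0_compat; lra).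
  exists (Rmin r r'). split; [apply Rmin_case; auto|].
  intros w Hwz. pose proof (Rmin_l r r'). pose proof (Rmin_r r r').
  specialize (Hw w ltac:(lra)).
  replace (Cminus (F w) (F z))
    with (Cplus (Cminus (Cminus (F w) (F z)) (Cmult l (Cminus w z))) (Cmult l (Cminus w z))) by cring.
  eapply Rle_lt_trans; [apply Cmod_triangle|]. rewrite Cmod_mult.
  pose proof (Cmod_ge_0 (Cminus w z)).
  assert (Cmod (Cminus w z) * (Cmod l + 1) < eps).
  { assert (Hlt : Cmod (Cminus w z) < r') by lra. unfold r' in Hlt.
    apply (Rmult_lt_compat_r (Cmod l + 1)) in Hlt; [|lra]. unfold Rdiv in Hlt.
    rewrite Rmult_assoc, Rinv_l, Rmult_1_r in Hlt; lra. }
  nra.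
Qed.

Lemma cderiv_ratio_approx F G z0 Fp Gp k :
  is_cderiv F z0 Fp -> is_cderiv G z0 Gp -> Fp <> RtoC 0 -> 0 < k ->
  exists r, 0 < r /\ forall w, Cmod (Cminus w z0) < r ->
    Cmod (Cminus (Cminus (G w) (G z0)) (Cmult (Complex.Cdiv Gp Fp) (Cminus (F w) (F z0))))
    <= k * Cmod (Cminus (F w) (F z0)).
Proof.
  intros HF HG HFp Hk.
  set (q := Complex.Cdiv Gp Fp). set (L := Cmod q). set (nF := Cmod Fp).
  assert (HnF : 0 < nF) by (apply Cmod_gt_0; auto).
  assert (HL : 0 <= L) by apply Cmod_ge_0.
  set (eps := Rmin (nF/2) (k*nF/(2*(L+1)))).
  assert (Heps : 0 < eps) by (unfold eps; apply Rmin_case; [lra|apply Rdiv_lt_0_compat; nra]).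
  assert (He1 : eps <= nF/2) by apply Rmin_l.
  assert (He2 : (L+1) * eps <= k*nF/2).
  { pose proof (Rmin_r (nF/2) (k*nF/(2*(L+1)))) as Hm. fold eps in Hm.
    apply (Rmult_le_compat_l (L+1)) in Hm; [|lra].
    replace ((L+1) * (k*nF/(2*(L+1)))) with (k*nF/2) in Hm by (field; lra). lra. }
  destruct (cderiv_taylor F _ _ eps HF Heps) as [rF [HrF KF]].
  destruct (cderiv_taylor G _ _ eps HG Heps) as [rG [HrG KG]].
  exists (Rmin rF rG). split; [apply Rmin_case; auto|]. intros w Hw.
  specialize (KF w ltac:(pose proof (Rmin_l rF rG); lra)).
  specialize (KG w ltac:(pose proof (Rmin_r rF rG); lra)).
  set (dz := Cminus w z0) in *. set (D := Cmod dz) in *.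
  set (dF := Cminus (F w) (F z0)) in *. set (dG := Cminus (G w) (G z0)) in *.
  set (eF := Cminus dF (Cmult Fp dz)) in *. set (eG := Cminus dG (Cmult Gp dz)) in *.
  assert (HD : 0 <= D) by apply Cmod_ge_0.
  assert (Err : Cminus dG (Cmult q dF) = Cminus eG (Cmult q eF))
    by (unfold eG, eF, q; cfield; auto).
  assert (Hdz : nF * D <= 2 * Cmod dF).
  { assert (nF * D <= Cmod dF + Cmod eF).
    { unfold nF, D. rewrite <- Cmod_mult.
      replace (Cmult Fp dz) with (Cplus dF (Complex.Copp eF)) by (unfold eF; cring).
      rewrite <- (Cmod_opp eF). apply Cmod_triangle. }
    nra. }
  rewrite Err.
  replace (Cminus eG (Cmult q eF)) with (Cplus eG (Complex.Copp (Cmult q eF))) by cring.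
  eapply Rle_trans; [apply Cmod_triangle|]. rewrite Cmod_opp, Cmod_mult. fold L.
  assert (L * Cmod eF <= L * (eps * D)) by (apply Rmult_le_compat_l; lra).
  assert ((L + 1) * eps * D <= k * nF / 2 * D) by (apply Rmult_le_compat_r; lra).
  nra.
Qed.

(* The numerator of the derivative of the shear function:
   q_a(z) = 1 - 2 a z + z^2. *)
Definition qpoly (a : R) (z : C) : C :=
  Cplus (Cminus (RtoC 1) (Cmult (RtoC (2*a)) z)) (Cmult z z).

(* If h + g = z(1 - a z)/(1 - z^2) on E then h' + g' = q_a(z)/(1 - z^2)^2:
   differentiate (h + g)(1 - z^2) = z(1 - a z) and use uniqueness. *)
Lemma shear_sum_derivative (al : R) (h g : Cpx -> Cpx) z a b :
  (forall w, inE w -> Cadd (h w) (g w) = shear_fun al w) ->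
  inE z -> is_cderiv h z a -> is_cderiv g z b ->
  Cplus a b = Complex.Cdiv (qpoly al z)
                (Cmult (Cminus (RtoC 1) (Cmult z z)) (Cminus (RtoC 1) (Cmult z z))).
Proof.
  intros Hsum Hz Ha Hb.
  pose proof Hz as Hz'. rewrite inE_Cmod in Hz'. pose proof (one_minus_sq_neq_0 z Hz') as HD.
  apply cderiv_Cderive in Ha, Hb.
  set (N := fun w : C => Cmult w (Cminus (RtoC 1) (Cmult (RtoC al) w))).
  set (D := fun w : C => Cminus (RtoC 1) (Cmult w w)).
  assert (HN : Cderive N z (Cminus (RtoC 1) (Cmult (RtoC (2*al)) z))).
  { eapply Cderive_eq.
    - apply Cderive_mult; [apply Cderive_id|].
      apply Cderive_minus; [apply Cderive_const|].
      apply Cderive_mult; [apply Cderive_const | apply Cderive_id].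
    - cring. }
  set (dD := Cminus (RtoC 0) (Cplus (Cmult (RtoC 1) z) (Cmult z (RtoC 1)))).
  assert (HD' : Cderive D z dD).
  { apply Cderive_minus; [apply Cderive_const|]. apply Cderive_mult; apply Cderive_id. }
  assert (HsD : Cderive N z (Cplus (Cmult (Cplus a b) (D z)) (Cmult (Cplus (h z) (g z)) dD))).
  { eapply Cderive_ext_E; [exact Hz| |exact (Cderive_mult _ _ _ _ _ (Cderive_plus _ _ _ _ _ Ha Hb) HD')].
    intros w Hw. cbv beta. rewrite <- Cadd_C, Hsum by auto. unfold shear_fun, N, D. to_C.
    rewrite inE_Cmod in Hw. pose proof (one_minus_sq_neq_0 w Hw). cfield. auto. }
  pose proof (Cderive_unique _ _ _ _ HN HsD) as E.
  rewrite <- Cadd_C, Hsum in E by auto. unfold shear_fun, D, dD in E. to_C.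
  match type of E with ?L = Cplus ?P ?M => assert (E2 : P = Cminus L M) by (rewrite E; cring) end.
  transitivity (Complex.Cdiv (Cmult (Cplus a b) (Cminus (RtoC 1) (Cmult z z))) (Cminus (RtoC 1) (Cmult z z))).
  - cfield. auto.
  - rewrite E2. unfold qpoly. cfield. auto.
Qed.

(* Real and imaginary parts of q_a(x + iy), and the quadratic form
   Re(q_{a1} conj q_{a2}) + 4(a1 - a2) y^2 controlling the dilatation of the
   convex combination. *)
Definition qre (a x y : R) := 1 - 2*a*x + x*x - y*y.
Definition qim (a x y : R) := -2*a*y + 2*x*y.
Definition Qform (a1 a2 x y : R) :=
  qre a1 x y * qre a2 x y + qim a1 x y * qim a2 x y + 4*(a1-a2)*(y*y).

Lemma qpoly_components a x y : qpoly a (x,y) = (qre a x y, qim a x y).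
Proof. unfold qpoly, qre, qim. cring. Qed.

(* Qform a1 a2 >= 0 for -1 <= a2 <= a1 <= 1: it is affine in each parameter,
   and nonnegative on the diagonal and at (a1, a2) = (1, -1). *)
Lemma Qform_nonneg a1 a2 x y : -1 <= a2 -> a2 <= a1 -> a1 <= 1 -> 0 <= Qform a1 a2 x y.
Proof.
  intros H1 H2 H3.
  assert (Hdiag : forall a, 0 <= Qform a a x y) by (intro a; unfold Qform; nra).
  assert (Hcorner : 0 <= Qform 1 (-1) x y).
  { replace (Qform 1 (-1) x y) with ((1 - x*x - y*y)^2 + 4*(y*y)) by (unfold Qform, qre, qim; ring).
    pose proof (pow2_ge_0 (1-x*x-y*y)). nra. }
  assert (Hedge : 0 <= Qform 1 a2 x y).
  { assert (2 * Qform 1 a2 x y = (1+a2) * Qform 1 1 x y + (1-a2) * Qform 1 (-1) x y)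
      by (unfold Qform, qre, qim; ring).
    pose proof (Hdiag 1). nra. }
  destruct (Req_dec a2 1) as [E|E].
  - subst. replace a1 with 1 by lra. apply Hdiag.
  - assert ((1-a2) * Qform a1 a2 x y = (a1-a2) * Qform 1 a2 x y + (1-a1) * Qform a2 a2 x y)
      by (unfold Qform, qre, qim; ring).
    pose proof (Hdiag a2). apply (Rmult_le_reg_l (1-a2)); nra.
Qed.

Lemma qpoly_neq_0 a z : -1 <= a <= 1 -> Cmod z < 1 -> qpoly a z <> RtoC 0.
Proof.
  destruct z as [x y]. intros Ha Hz E. apply Cmod_lt1_sq in Hz. rewrite qpoly_components in E.
  injection E as E1 E2. unfold qre in E1. unfold qim in E2.
  assert (H : y * (x - a) = 0) by nra. apply Rmult_integral in H.
  destruct H as [-> | H]; [|replace x with a in * by lra; nra].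
  assert (0 <= (1-a)*(1+a)) by (apply Rmult_le_pos; lra).
  assert ((x-a)*(x-a) = 0) by nra.
  assert (x = a) by nra. subst. nra.
Qed.

Lemma diff_over_sum_bound (A B M z : C) :
  0 <= fst A * fst B + snd A * snd B -> (A <> RtoC 0 \/ B <> RtoC 0) ->
  M <> RtoC 0 -> Cmod z < 1 ->
  Complex.Cdiv (Cplus A B) M <> RtoC 0 /\
  Cmod (Complex.Cdiv (Complex.Cdiv (Cmult z (Cminus B A)) M) (Complex.Cdiv (Cplus A B) M)) < 1.
Proof.
  intros Hre Hnz HM Hz.
  assert (HAB : Cplus A B <> RtoC 0).
  { destruct A as [a1 a2], B as [b1 b2]; simpl in *. intro E. injection E as E1 E2.
    replace b1 with (- a1) in * by lra. replace b2 with (- a2) in * by lra.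
    assert (a1 = 0) by nra. assert (a2 = 0) by nra. subst.
    destruct Hnz as [h|h]; apply h; cring. }
  assert (Hle : Cmod (Cminus B A) <= Cmod (Cplus A B))
    by (apply Cmod_le_sq; destruct A, B; simpl in *; nra).
  split.
  - intro E. apply HAB. transitivity (Cmult (Complex.Cdiv (Cplus A B) M) M); [cfield; auto|].
    rewrite E. cring.
  - replace (Complex.Cdiv (Complex.Cdiv (Cmult z (Cminus B A)) M) (Complex.Cdiv (Cplus A B) M))
      with (Cmult z (Complex.Cdiv (Cminus B A) (Cplus A B))) by (cfield; auto).
    rewrite Cmod_mult, Cmod_div by auto.
    apply Cmod_gt_0 in HAB.
    assert (Hq : Cmod (Cminus B A) / Cmod (Cplus A B) <= 1).
    { apply (Rmult_le_reg_r (Cmod (Cplus A B))); auto.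
      unfold Rdiv. rewrite Rmult_assoc, Rinv_l; lra. }
    assert (0 <= Cmod (Cminus B A) / Cmod (Cplus A B))
      by (apply Rdiv_le_0_compat; [apply Cmod_ge_0 | lra]).
    pose proof (Cmod_ge_0 z). nra.
Qed.

(* With
   A = t q_{al1}(1+z), B = (1-t) q_{al2}(1-z) and M = (1-z)(1+z)(1-z^2)^2 we
   get h' = (A + B)/M, g' = z(B - A)/M, and Re(A conj B) = t(1-t)(1-|z|^2) Qform. *)
Lemma combination_sense_preserving al1 al2 t z a1 a2 :
  -1 <= al2 -> al2 <= al1 -> al1 <= 1 -> 0 <= t <= 1 -> Cmod z < 1 ->
  Cmult a1 (Cminus (RtoC 1) z) = Complex.Cdiv (qpoly al1 z)
     (Cmult (Cminus (RtoC 1) (Cmult z z)) (Cminus (RtoC 1) (Cmult z z))) ->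
  Cmult a2 (Cplus (RtoC 1) z) = Complex.Cdiv (qpoly al2 z)
     (Cmult (Cminus (RtoC 1) (Cmult z z)) (Cminus (RtoC 1) (Cmult z z))) ->
  Cplus (Cmult (RtoC t) a1) (Cmult (RtoC (1-t)) a2) <> RtoC 0 /\
  Cmod (Complex.Cdiv (Cplus (Cmult (RtoC t) (Cmult (Complex.Copp z) a1)) (Cmult (RtoC (1-t)) (Cmult z a2)))
                     (Cplus (Cmult (RtoC t) a1) (Cmult (RtoC (1-t)) a2))) < 1.
Proof.
  intros H1 H2 H3 Ht Hz E1 E2.
  pose proof (one_minus_neq_0 z Hz) as Hm. pose proof (one_plus_neq_0 z Hz) as Hp.
  pose proof (one_minus_sq_neq_0 z Hz) as HD.
  set (D := Cminus (RtoC 1) (Cmult z z)) in *.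
  assert (Ea1 : a1 = Complex.Cdiv (qpoly al1 z) (Cmult (Cminus (RtoC 1) z) (Cmult D D))).
  { transitivity (Complex.Cdiv (Cmult a1 (Cminus (RtoC 1) z)) (Cminus (RtoC 1) z)); [cfield; auto|].
    rewrite E1. cfield. auto. }
  assert (Ea2 : a2 = Complex.Cdiv (qpoly al2 z) (Cmult (Cplus (RtoC 1) z) (Cmult D D))).
  { transitivity (Complex.Cdiv (Cmult a2 (Cplus (RtoC 1) z)) (Cplus (RtoC 1) z)); [cfield; auto|].
    rewrite E2. cfield. auto. }
  set (A := Cmult (RtoC t) (Cmult (qpoly al1 z) (Cplus (RtoC 1) z))).
  set (B := Cmult (RtoC (1-t)) (Cmult (qpoly al2 z) (Cminus (RtoC 1) z))).
  set (M := Cmult (Cmult (Cminus (RtoC 1) z) (Cplus (RtoC 1) z)) (Cmult D D)).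
  assert (HM : M <> RtoC 0) by (unfold M; repeat apply Cmult_neq_0; auto).
  replace (Cplus (Cmult (RtoC t) a1) (Cmult (RtoC (1-t)) a2)) with (Complex.Cdiv (Cplus A B) M)
    by (rewrite Ea1, Ea2; unfold A, B, M; cfield; auto).
  replace (Cplus (Cmult (RtoC t) (Cmult (Complex.Copp z) a1)) (Cmult (RtoC (1-t)) (Cmult z a2)))
    with (Complex.Cdiv (Cmult z (Cminus B A)) M)
    by (rewrite Ea1, Ea2; unfold A, B, M; cfield; auto).
  apply diff_over_sum_bound; auto.
  - destruct z as [x y]. pose proof (Cmod_lt1_sq x y Hz).
    pose proof (Qform_nonneg al1 al2 x y H1 H2 H3).
    replace (fst A * fst B + snd A * snd B) with (t*(1-t)*(1 - x*x - y*y) * Qform al1 al2 x y)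
      by (unfold A, B; rewrite !qpoly_components; simpl; unfold Qform, qre, qim; ring).
    apply Rmult_le_pos; [|auto]. apply Rmult_le_pos; [|lra]. apply Rmult_le_pos; lra.
  - destruct (Req_dec t 0) as [->|Ht0]; [right|left]; unfold A, B;
      (apply Cmult_neq_0; [apply RtoC_neq_0; lra | apply Cmult_neq_0; auto; apply qpoly_neq_0; auto; lra]).
Qed.

(* The Cayley transform zeta = (1+z)/(1-z)
   maps E onto Re zeta > 0, and shear_fun be z = J(zeta) with
   J(zeta) = ((1-be) zeta - (1+be)/zeta)/4 + be/2.  Writing zeta = a(1 + i x),
   a > 0, the level set {Re J = (K + 2 be)/4} is the curve x |-> a(x)(1 + i x)
   where a(x) is the positive root of (1-be) a - (1+be)/((1+x^2) a) = K; along
   it Im J = x S(x)/4 with S(x) = sqrt(K^2 + 4(1-be^2)/(1+x^2)). *)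
Definition lev_S (be K x : R) := sqrt (K*K + 4*(1-be*be)/(1+x*x)).
Definition lev_radius (be K x : R) :=
  if Rlt_dec be 1 then (K + lev_S be K x)/(2*(1-be))
  else 2*(1+be)/(1+x*x)/(lev_S be K x - K).
Definition lev_zeta (be K x : R) : C := (lev_radius be K x, lev_radius be K x * x).
Definition lev_point (be K x : R) : C :=
  Complex.Cdiv (Cminus (lev_zeta be K x) (RtoC 1)) (Cplus (lev_zeta be K x) (RtoC 1)).
Definition lev_height (be K x : R) := x * lev_S be K x / 4.
(* The values of K for which the level set is nonempty. *)
Definition admissible (be K : R) := (be = -1 -> 0 < K) /\ (be = 1 -> K < 0).
Definition cayley_shear (be : R) (zt : C) : C :=
  Cplus (Complex.Cdiv (Cminus (Cmult (RtoC (1-be)) zt) (Complex.Cdiv (RtoC (1+be)) zt)) (RtoC 4))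
        (Complex.Cdiv (RtoC be) (RtoC 2)).

Lemma one_plus_sq_pos x : 0 < 1 + x*x.
Proof. nra. Qed.

Lemma lev_S_sq be K x : -1 <= be <= 1 ->
  0 <= lev_S be K x /\ lev_S be K x * lev_S be K x = K*K + 4*(1-be*be)/(1+x*x).
Proof.
  intros Hb. unfold lev_S. split; [apply sqrt_pos|]. apply sqrt_sqrt.
  pose proof (one_plus_sq_pos x). assert (0 <= 1 - be*be) by nra.
  assert (0 <= 4*(1-be*be)/(1+x*x)) by (apply Rdiv_le_0_compat; lra). nra.
Qed.

Lemma lev_radius_spec be K x : -1 <= be <= 1 -> admissible be K ->
  0 < lev_radius be K x /\
  (1-be)*lev_radius be K x - (1+be)/(1+x*x)/lev_radius be K x = K /\
  (1-be)*lev_radius be K x + (1+be)/(1+x*x)/lev_radius be K x = lev_S be K x.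
Proof.
  intros Hb [G1 G2]. pose proof (one_plus_sq_pos x) as Hx.
  destruct (lev_S_sq be K x Hb) as [HS0 HS2].
  set (S := lev_S be K x) in *. set (p := /(1+x*x)).
  assert (Hp : 0 < p) by (apply Rinv_0_lt_compat; lra).
  replace (4*(1-be*be)/(1+x*x)) with (4*(1-be*be)*p) in HS2 by (unfold p; field; lra).
  replace ((1+be)/(1+x*x)) with ((1+be)*p) by (unfold p; field; lra).
  unfold lev_radius. fold S. destruct (Rlt_dec be 1) as [Hlt|Hge].
  - assert (HKS : 0 < K + S).
    { destruct (Req_dec be (-1)) as [E|E].
      - subst. specialize (G1 eq_refl). assert (S*S = K*K) by nra. nra.
      - assert (0 < (1-be*be)*p) by (apply Rmult_lt_0_compat; nra). nra. }
    set (a := (K+S)/(2*(1-be))).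
    assert (Ha : 0 < a) by (unfold a; apply Rdiv_lt_0_compat; lra).
    assert (E : (1+be)*p/a = (S-K)/2).
    { replace ((1+be)*p) with ((S*S - K*K)/(4*(1-be))) by (rewrite HS2; field; lra).
      unfold a. field. lra. }
    rewrite E. unfold a. split; [auto | split; field; lra].
  - replace be with 1 in * by lra. specialize (G2 eq_refl).
    assert (HSK : S = -K) by nra.
    assert (0 < 2*(1+1)*p/(S-K)) by (apply Rdiv_lt_0_compat; lra).
    unfold p in *. split; [lra|]. rewrite HSK. split; field; lra.
Qed.

Lemma lev_radius_unique be K x A : -1 <= be <= 1 -> 0 < A ->
  (1-be)*A - (1+be)/(1+x*x)/A = K -> admissible be K /\ A = lev_radius be K x.
Proof.
  intros Hb HA HK. pose proof (one_plus_sq_pos x) as Hx.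
  set (p := /(1+x*x)). assert (Hp : 0 < p) by (apply Rinv_0_lt_compat; lra).
  replace ((1+be)/(1+x*x)) with ((1+be)*p) in HK by (unfold p; field; lra).
  assert (G : admissible be K).
  { split; intro E; subst.
    - replace ((1 - -1)*A - (1 + -1)*p/A) with (2*A) by (field; lra). lra.
    - replace ((1 - 1)*A - (1 + 1)*p/A) with (-(2*p/A)) by (field; lra).
      assert (0 < 2*p/A) by (apply Rdiv_lt_0_compat; lra). lra. }
  split; auto.
  destruct (lev_radius_spec be K x Hb G) as [Ha [Hk _]].
  set (a := lev_radius be K x) in *.
  replace ((1+be)/(1+x*x)) with ((1+be)*p) in Hk by (unfold p; field; lra).
  assert (E : (A - a) * ((1-be) + (1+be)*p/(a*A)) = 0).
  { replace ((A - a) * ((1-be) + (1+be)*p/(a*A)))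
      with (((1-be)*A - (1+be)*p/A) - ((1-be)*a - (1+be)*p/a)) by (field; lra). lra. }
  assert (0 < (1-be) + (1+be)*p/(a*A)).
  { destruct (Req_dec be 1) as [->|E1].
    - assert (0 < (1+1)*p/(a*A)) by (apply Rdiv_lt_0_compat; nra). lra.
    - assert (0 <= (1+be)*p/(a*A)) by (apply Rdiv_le_0_compat; nra). lra. }
  apply Rmult_integral in E. destruct E; lra.
Qed.

Lemma shear_fun_cayley be zt : zt <> RtoC 0 -> Cplus zt (RtoC 1) <> RtoC 0 ->
  shear_fun be (Complex.Cdiv (Cminus zt (RtoC 1)) (Cplus zt (RtoC 1))) = cayley_shear be zt.
Proof.
  intros H0 H1. unfold shear_fun, cayley_shear. to_C. cfield.
  repeat split; auto.
  replace (Cminus (Cmult (Cplus zt (RtoC 1)) (Cplus zt (RtoC 1)))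
                 (Cmult (Cminus zt (RtoC 1)) (Cminus zt (RtoC 1))))
    with (Cmult (RtoC 4) zt) by cring.
  apply Cmult_neq_0; auto. apply RtoC_neq_0. lra.
Qed.

Lemma cayley_shear_components be a x : 0 < a ->
  cayley_shear be (a, a*x) = (((1-be)*a - (1+be)/(1+x*x)/a)/4 + be/2,
                              x*((1-be)*a + (1+be)/(1+x*x)/a)/4).
Proof.
  intros Ha. pose proof (one_plus_sq_pos x).
  unfold cayley_shear, Complex.Cdiv, Complex.Cinv, Cminus, Cplus, Cmult, Complex.Copp, RtoC.
  apply injective_projections; simpl; field; nra.
Qed.

Lemma lev_point_spec be K x : -1 <= be <= 1 -> admissible be K ->
  Cmod (lev_point be K x) < 1 /\
  shear_fun be (lev_point be K x) = ((K + 2*be)/4, lev_height be K x).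
Proof.
  intros Hb G. destruct (lev_radius_spec be K x Hb G) as [Ha [E1 E2]].
  unfold lev_point, lev_zeta. set (a := lev_radius be K x) in *.
  assert (Hz0 : ((a, a*x) : C) <> RtoC 0) by (intro E; injection E; lra).
  assert (Hz1 : Cplus (a, a*x) (RtoC 1) <> RtoC 0) by (intro E; injection E; simpl; lra).
  split.
  - rewrite Cmod_div by auto.
    assert (Cmod (Cminus (a, a*x) (RtoC 1)) < Cmod (Cplus (a, a*x) (RtoC 1)))
      by (apply Cmod_lt_sq; simpl; nra).
    apply Cmod_gt_0 in Hz1. apply (Rmult_lt_reg_r (Cmod (Cplus (a, a * x) (RtoC 1)))); auto.
    unfold Rdiv. rewrite Rmult_assoc, Rinv_l; lra.
  - rewrite shear_fun_cayley, cayley_shear_components by auto. rewrite E1, E2.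
    unfold lev_height. apply injective_projections; simpl; field.
Qed.

Lemma lev_point_onto be K z : -1 <= be <= 1 -> Cmod z < 1 ->
  fst (shear_fun be z) = (K + 2*be)/4 -> admissible be K /\ exists x, lev_point be K x = z.
Proof.
  intros Hb Hz HK.
  pose proof (one_minus_neq_0 z Hz) as Hm. pose proof (one_plus_neq_0 z Hz) as Hp.
  remember (Complex.Cdiv (Cplus (RtoC 1) z) (Cminus (RtoC 1) z)) as zt eqn:Hzt.
  assert (Hzt0 : zt <> RtoC 0).
  { intro E. apply Hp. transitivity (Cmult zt (Cminus (RtoC 1) z)); [rewrite Hzt; cfield; auto|].
    rewrite E. cring. }
  assert (Hzt1 : Cplus zt (RtoC 1) <> RtoC 0).
  { intro E. assert (H2 : Cmult (Cplus zt (RtoC 1)) (Cminus (RtoC 1) z) = RtoC 2)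
      by (rewrite Hzt; cfield; auto).
    rewrite E in H2. injection H2. lra. }
  assert (Ez : z = Complex.Cdiv (Cminus zt (RtoC 1)) (Cplus zt (RtoC 1))).
  { rewrite Hzt. cfield. split; auto.
    replace (Cplus (Cplus (RtoC 1) z) (Cminus (RtoC 1) z)) with (RtoC 2) by cring.
    apply RtoC_neq_0. lra. }
  destruct z as [x y]. pose proof (Cmod_lt1_sq x y Hz) as Hxy.
  assert (Hden : 0 < (1-x)*(1-x) + y*y).
  { destruct (Req_dec y 0) as [->|]; [|nra].
    assert (x <> 1) by (intros ->; apply Hm; cring). nra. }
  assert (HA0 : 0 < fst zt).
  { replace (fst zt) with ((1 - x*x - y*y)/((1-x)*(1-x) + y*y))
      by (rewrite Hzt; unfold Complex.Cdiv, Complex.Cinv, Cmult, Cplus, Cminus, Complex.Copp, RtoC;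
          simpl; field; lra).
    apply Rdiv_lt_0_compat; lra. }
  set (A := fst zt) in *. set (X := snd zt / A).
  assert (Ezt : zt = (A, A*X)) by (apply injective_projections; simpl; [reflexivity | unfold X; field; lra]).
  rewrite Ez, shear_fun_cayley, Ezt, cayley_shear_components in HK by auto. simpl in HK.
  destruct (lev_radius_unique be K X A Hb HA0 ltac:(lra)) as [G HAa].
  split; auto. exists X. unfold lev_point, lev_zeta. rewrite <- HAa, <- Ezt. symmetry. exact Ez.
Qed.

(* S > 0 on admissible levels, as S is a sum of two nonnegative terms,
   one of them positive. *)
Lemma lev_S_pos be K x : -1 <= be <= 1 -> admissible be K -> 0 < lev_S be K x.
Proof.
  intros Hb G. destruct (lev_radius_spec be K x Hb G) as [Ha [_ E]].
  rewrite <- E. pose proof (one_plus_sq_pos x).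
  destruct (Req_dec be 1) as [->|Hne].
  - assert (0 < (1+1)/(1+x*x)/lev_radius 1 K x) by (repeat apply Rdiv_lt_0_compat; lra). lra.
  - assert (0 <= (1+be)/(1+x*x)/lev_radius be K x) by (repeat apply Rdiv_le_0_compat; lra).
    assert (0 < (1-be)*lev_radius be K x) by (apply Rmult_lt_0_compat; lra). lra.
Qed.

(* The height x S(x)/4 is strictly increasing: its square
   (K^2 x^2 + 4(1-be^2) x^2/(1+x^2))/16 increases with x^2, and it is odd. *)
Lemma lev_height_increasing_nonneg be K x y : -1 <= be <= 1 -> admissible be K ->
  0 <= x -> x < y -> lev_height be K x < lev_height be K y.
Proof.
  intros Hb G Hx Hxy. unfold lev_height.
  pose proof (lev_S_pos be K x Hb G). pose proof (lev_S_pos be K y Hb G).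
  destruct (lev_S_sq be K x Hb) as [_ Ex]. destruct (lev_S_sq be K y Hb) as [_ Ey].
  pose proof (one_plus_sq_pos x). pose proof (one_plus_sq_pos y).
  set (Sx := lev_S be K x) in *. set (Sy := lev_S be K y) in *.
  assert (Hfrac : x*x/(1+x*x) < y*y/(1+y*y)).
  { apply (Rmult_lt_reg_r ((1+x*x)*(1+y*y))); [nra|]. field_simplify; nra. }
  assert (Hsq : x*x*(Sx*Sx) < y*y*(Sy*Sy)).
  { rewrite Ex, Ey.
    replace (x*x*(K*K + 4*(1-be*be)/(1+x*x))) with (K*K*(x*x) + 4*(1-be*be)*(x*x/(1+x*x))) by (field; lra).
    replace (y*y*(K*K + 4*(1-be*be)/(1+y*y))) with (K*K*(y*y) + 4*(1-be*be)*(y*y/(1+y*y))) by (field; lra).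
    assert (K*K*(x*x) <= K*K*(y*y)) by (apply Rmult_le_compat_l; nra).
    assert (4*(1-be*be)*(x*x/(1+x*x)) <= 4*(1-be*be)*(y*y/(1+y*y))) by (apply Rmult_le_compat_l; nra).
    destruct (Req_dec K 0) as [->|HK].
    2: { assert (0 < K*K) by nra. assert (x*x < y*y) by nra.
         assert (K*K*(x*x) < K*K*(y*y)) by (apply Rmult_lt_compat_l; lra). lra. }
    destruct G as [G1 G2].
    assert (be <> 1) by (intros ->; specialize (G2 eq_refl); lra).
    assert (be <> -1) by (intros ->; specialize (G1 eq_refl); lra).
    assert (0 < 4*(1-be*be)) by nra. nra. }
  apply Rmult_lt_compat_r; [lra|].
  assert (0 <= x * Sx) by (apply Rmult_le_pos; lra).
  destruct (Rlt_or_le (x * Sx) (y * Sy)) as [L|L]; [exact L|].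
  assert (y * Sy * (y * Sy) <= x * Sx * (x * Sx)) by (apply Rmult_le_compat; nra).
  nra.
Qed.

Lemma lev_height_increasing be K x y : -1 <= be <= 1 -> admissible be K ->
  x < y -> lev_height be K x < lev_height be K y.
Proof.
  intros Hb G Hxy.
  assert (Hodd : forall u, lev_height be K (-u) = - lev_height be K u).
  { intro u. unfold lev_height, lev_S. replace (- u * - u) with (u * u) by ring. field. }
  destruct (Rle_or_lt 0 x) as [Hx|Hx]; [apply lev_height_increasing_nonneg; auto|].
  destruct (Rle_or_lt 0 y) as [Hy|Hy].
  - pose proof (lev_S_pos be K x Hb G). pose proof (lev_S_pos be K y Hb G).
    unfold lev_height. nra.
  - pose proof (lev_height_increasing_nonneg be K (-y) (-x) Hb G ltac:(lra) ltac:(lra)).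
    rewrite !Hodd in H. lra.
Qed.

(* Continuity of the parametrization, via its real components; the wrappers
   fix the shape of the functions so that [solve_continuous] can apply them. *)
Lemma cont_plus (f g : R -> R) x :
  continuous f x -> continuous g x -> continuous (fun y => f y + g y) x.
Proof. exact (continuous_plus f g x). Qed.
Lemma cont_minus (f g : R -> R) x :
  continuous f x -> continuous g x -> continuous (fun y => f y - g y) x.
Proof. exact (continuous_minus f g x). Qed.
Lemma cont_mult (f g : R -> R) x :
  continuous f x -> continuous g x -> continuous (fun y => f y * g y) x.
Proof. exact (continuous_mult f g x). Qed.
Lemma cont_div (f g : R -> R) x :
  continuous f x -> continuous g x -> g x <> 0 -> continuous (fun y => f y / g y) x.
Proof. intros. apply (cont_mult f (fun y => / g y)); auto. apply continuous_Rinv_comp; auto. Qed.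
Lemma cont_sqrt (f : R -> R) x : continuous f x -> continuous (fun y => sqrt (f y)) x.
Proof. apply continuous_sqrt_comp. Qed.

Ltac solve_continuous := repeat match goal with
  | |- continuous (fun y => _ + _) _ => apply cont_plus
  | |- continuous (fun y => _ - _) _ => apply cont_minus
  | |- continuous (fun y => _ * _) _ => apply cont_mult
  | |- continuous (fun y => _ / _) _ => apply cont_div
  | |- continuous (fun y => sqrt _) _ => apply cont_sqrt
  | |- continuous (fun y => y) _ => apply continuous_id
  | |- continuous (fun y => ?c) _ => apply continuous_const
  end.

Lemma lev_radius_continuous be K x : -1 <= be <= 1 -> admissible be K ->
  continuous (fun y => lev_radius be K y) x.
Proof.
  intros Hb G. pose proof (lev_S_sq be K x Hb) as [HS _]. pose proof (one_plus_sq_pos x).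
  unfold lev_radius. destruct (Rlt_dec be 1) as [Hlt|Hge].
  - unfold lev_S. solve_continuous; lra.
  - replace be with 1 in * by lra. destruct G as [_ G2]. specialize (G2 eq_refl).
    unfold lev_S in *. solve_continuous; lra.
Qed.

(* Real and imaginary parts of (zeta - 1)/(zeta + 1) for zeta = a(1 + i x). *)
Definition lev_point_re (a x : R) := ((a-1)*(a+1) + (a*x)*(a*x)) / ((a+1)*(a+1) + (a*x)*(a*x)).
Definition lev_point_im (a x : R) := ((a*x)*(a+1) - (a-1)*(a*x)) / ((a+1)*(a+1) + (a*x)*(a*x)).

Lemma lev_point_components be K x : -1 <= be <= 1 -> admissible be K ->
  lev_point be K x = (lev_point_re (lev_radius be K x) x, lev_point_im (lev_radius be K x) x).
Proof.
  intros Hb G. destruct (lev_radius_spec be K x Hb G) as [Ha _].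
  unfold lev_point, lev_zeta, lev_point_re, lev_point_im. set (a := lev_radius be K x) in *.
  unfold Complex.Cdiv, Complex.Cinv, Cminus, Cplus, Cmult, Complex.Copp, RtoC.
  apply injective_projections; simpl; field; nra.
Qed.

Lemma continuous_eps (f : R -> R) x : continuous f x ->
  forall eps, 0 < eps -> exists d, 0 < d /\ forall y, Rabs (y - x) < d -> Rabs (f y - f x) < eps.
Proof.
  intros H eps He. destruct (H (ball (f x) eps)) as [d Hd]; [exists (mkposreal _ He); auto|].
  exists d. split; [apply cond_pos|]. intros y Hy. apply (Hd y). exact Hy.
Qed.

Lemma lev_point_continuous be K x0 : -1 <= be <= 1 -> admissible be K ->
  forall rho, 0 < rho -> exists d, 0 < d /\
    forall x, Rabs (x - x0) < d -> Cmod (Cminus (lev_point be K x) (lev_point be K x0)) < rho.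
Proof.
  intros Hb G rho Hr.
  assert (Hden : forall x, (lev_radius be K x + 1) * (lev_radius be K x + 1)
                   + (lev_radius be K x * x) * (lev_radius be K x * x) <> 0).
  { intro x. destruct (lev_radius_spec be K x Hb G) as [Ha _]. nra. }
  assert (C1 : continuous (fun x => lev_point_re (lev_radius be K x) x) x0).
  { unfold lev_point_re. solve_continuous; try apply lev_radius_continuous; auto. }
  assert (C2 : continuous (fun x => lev_point_im (lev_radius be K x) x) x0).
  { unfold lev_point_im. solve_continuous; try apply lev_radius_continuous; auto. }
  destruct (continuous_eps _ _ C1 (rho/2) ltac:(lra)) as [d1 [Hd1 K1]].
  destruct (continuous_eps _ _ C2 (rho/2) ltac:(lra)) as [d2 [Hd2 K2]].
  exists (Rmin d1 d2). split; [apply Rmin_case; lra|].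
  intros x Hx. rewrite !lev_point_components by auto.
  eapply Rle_lt_trans; [apply Cmod_le_abs_sum|]. simpl.
  specialize (K1 x ltac:(pose proof (Rmin_l d1 d2); lra)).
  specialize (K2 x ltac:(pose proof (Rmin_r d1 d2); lra)).
  unfold Rminus in K1, K2. lra.
Qed.

Definition locally_increasing (q : R -> R) (x0 : R) : Prop :=
  exists d, 0 < d /\ forall x, Rabs (x - x0) < d -> x <> x0 -> 0 < (q x - q x0) * (x - x0).

(* Locally strictly increasing everywhere implies strictly increasing: the
   supremum m of the y such that q a < q on (a, y] satisfies q a < q m, and
   cannot lie below b. *)
Lemma locally_increasing_increasing (q : R -> R) :
  (forall x0, locally_increasing q x0) -> forall a b, a < b -> q a < q b.
Proof.
  intros Hloc a b Hab.
  set (S := fun y => a <= y <= b /\ forall y', a < y' <= y -> q a < q y').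
  destruct (completeness S) as [m [Hub Hlub]].
  { exists b. intros y [Hy _]. lra. }
  { exists a. split; [lra | intros; lra]. }
  assert (Ham : a <= m) by (apply Hub; split; [lra | intros; lra]).
  assert (Hmb : m <= b) by (apply Hlub; intros y [Hy _]; lra).
  assert (Below : forall y', a < y' < m -> q a < q y').
  { intros y' Hy'. apply NNPP. intro Hn.
    assert (is_upper_bound S y').
    { intros y [Hy1 Hy2]. destruct (Rle_or_lt y y') as [h|h]; auto.
      exfalso. apply Hn. apply Hy2. lra. }
    specialize (Hlub y' H). lra. }
  assert (AtM : forall y', a < y' <= m -> q a < q y').
  { intros y' Hy'. destruct (Req_dec y' m) as [->|h]; [|apply Below; lra].
    destruct (Hloc m) as [d [Hd Kd]].
    set (y'' := Rmax ((a+m)/2) (m - d/2)).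
    assert (H1 : a < y'' < m) by (unfold y''; apply Rmax_case_strong; intros; lra).
    assert (H2 : Rabs (y'' - m) < d).
    { rewrite Rabs_left by lra. pose proof (Rmax_r ((a+m)/2) (m - d/2)). unfold y'' in *. lra. }
    specialize (Kd y'' H2 ltac:(lra)). pose proof (Below y'' H1). nra. }
  destruct (Req_dec m b) as [->|Hmb']; [apply AtM; lra|]. exfalso.
  destruct (Hloc m) as [d [Hd Kd]].
  set (y1 := Rmin (m + d/2) b).
  assert (Hy1 : m < y1 <= b) by (unfold y1; apply Rmin_case_strong; intros; lra).
  assert (S y1).
  { split; [lra|]. intros y' Hy'. destruct (Rle_or_lt y' m) as [h|h]; [apply AtM; lra|].
    assert (Rabs (y' - m) < d).
    { rewrite Rabs_right by lra. pose proof (Rmin_l (m + d/2) b). unfold y1 in *. lra. }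
    specialize (Kd y' H ltac:(lra)).
    destruct (Req_dec m a) as [E|E]; [subst; nra|].
    pose proof (AtM m ltac:(lra)). nra. }
  specialize (Hub y1 H). lra.
Qed.

Lemma intermediate_value (q : R -> R) : (forall x, continuity_pt q x) ->
  forall x1 x2 v, x1 <= x2 -> q x1 <= v <= q x2 -> exists x, q x = v.
Proof.
  intros Hc x1 x2 v H12 Hv.
  destruct (Req_dec (q x1) v) as [E|E]; [exists x1; auto|].
  destruct (Req_dec (q x2) v) as [E2|E2]; [exists x2; auto|].
  destruct (IVT (fun x => q x - v) x1 x2) as [x [_ Hq]].
  - intro y. apply continuity_pt_minus; [apply Hc | apply continuity_pt_const; intros ? ?; auto].
  - destruct (Req_dec x1 x2); [subst; lra | lra].
  - lra.
  - lra.
  - exists x. lra.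
Qed.

(* |b/a| < 1 implies Re((a - b)/(a + b)) > 0: the disk maps into the
   right half-plane under w |-> (1 - w)/(1 + w). *)
Lemma sense_ratio_re_pos (a b : C) : a <> RtoC 0 -> Cmod (Complex.Cdiv b a) < 1 ->
  Cplus a b <> RtoC 0 /\ 0 < fst (Complex.Cdiv (Cminus a b) (Cplus a b)).
Proof.
  intros Ha Hw. pose proof (one_plus_neq_0 _ Hw) as Hp.
  assert (Eb : b = Cmult (Complex.Cdiv b a) a) by (cfield; auto).
  set (w := Complex.Cdiv b a) in *.
  assert (Hab : Cplus a b <> RtoC 0).
  { rewrite Eb. replace (Cplus a (Cmult w a)) with (Cmult a (Cplus (RtoC 1) w)) by cring.
    apply Cmult_neq_0; auto. }
  split; auto.
  replace (Complex.Cdiv (Cminus a b) (Cplus a b)) with (Complex.Cdiv (Cminus (RtoC 1) w) (Cplus (RtoC 1) w))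
    by (rewrite Eb in Hab |- *; cfield; repeat split; auto).
  destruct w as [u v]. pose proof (Cmod_lt1_sq u v Hw) as Huv.
  assert (Hd : 0 < (1+u)*(1+u) + v*v).
  { destruct (Req_dec v 0) as [->|]; [|nra].
    assert (u <> -1) by (intros ->; apply Hp; cring). nra. }
  unfold Complex.Cdiv, Complex.Cinv, Cmult, Cminus, Cplus, Complex.Copp, RtoC. simpl.
  match goal with |- 0 < ?e => replace e with ((1 - u*u - v*v)/((1+u)*(1+u) + v*v)) by (field; nra) end.
  apply Rdiv_lt_0_compat; lra.
Qed.

(* If F maps a continuous curve ga onto an upward-oriented vertical line and
   Re(G'/F') > 0 at ga(x0), then Im G increases along ga near x0:
   the increment of F is i dp, so that of G is (G'/F') i dp up to an error
   of at most half of Re(G'/F') |dp|. *)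
Lemma vertical_curve_im_increasing (F G : Cpx -> Cpx) (ga : R -> C) (ps : R -> R) (c x0 : R) (Fp Gp : C) :
  is_cderiv F (ga x0) Fp -> is_cderiv G (ga x0) Gp -> Fp <> RtoC 0 ->
  0 < fst (Complex.Cdiv Gp Fp) ->
  (forall x, F (ga x) = (c, ps x)) -> (forall x y, x < y -> ps x < ps y) ->
  (forall rho, 0 < rho -> exists d, 0 < d /\
     forall x, Rabs (x - x0) < d -> Cmod (Cminus (ga x) (ga x0)) < rho) ->
  locally_increasing (fun x => snd (G (ga x))) x0.
Proof.
  intros HF HG HFp Hm HFga Hps Hga.
  set (q := Complex.Cdiv Gp Fp) in *. set (m := fst q) in *.
  destruct (cderiv_ratio_approx F G _ _ _ (m/2) HF HG HFp ltac:(lra)) as [r [Hr Kr]].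
  destruct (Hga r Hr) as [d [Hd Kd]].
  exists d. split; auto. intros x Hx Hne.
  specialize (Kr _ (Kd x Hx)). fold q in Kr.
  set (dp := ps x - ps x0).
  assert (Hdp : 0 < dp * (x - x0)).
  { unfold dp. destruct (Rlt_or_le x x0) as [h|h].
    - specialize (Hps x x0 h). nra.
    - specialize (Hps x0 x ltac:(lra)). nra. }
  assert (HdF : Cminus (F (ga x)) (F (ga x0)) = (0, dp)) by (rewrite !HFga; unfold dp; cring).
  rewrite HdF, Cmod_pure_imag in Kr.
  set (err := Cminus (Cminus (G (ga x)) (G (ga x0))) (Cmult q (0, dp))) in *.
  assert (Him : snd (G (ga x)) - snd (G (ga x0)) = m * dp + snd err) by (unfold err, m; simpl; ring).
  pose proof (Rabs_im_le_Cmod err) as He.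
  cbv beta. rewrite Him.
  destruct (Rlt_or_le x x0) as [h|h].
  - assert (dp < 0) by nra. rewrite Rabs_left in Kr by lra.
    pose proof (Rle_abs (snd err)). nra.
  - assert (0 < dp) by nra. rewrite Rabs_right in Kr by lra.
    pose proof (Rle_abs (- snd err)). rewrite Rabs_Ropp in *. nra.
Qed.

Lemma harm_components (h g : Cpx -> Cpx) z :
  harm h g z = (fst (Cadd (h z) (g z)), snd (Csub (h z) (g z))).
Proof. apply injective_projections; reflexivity. Qed.

Section ShearConstruction.

Variables (be : R) (h g : Cpx -> Cpx).
Hypothesis Hbe : -1 <= be <= 1.
Hypothesis Hshear : forall z, inE z -> Cadd (h z) (g z) = shear_fun be z.
Hypothesis Hsense : forall z, inE z -> exists a b,
  is_cderiv h z a /\ is_cderiv g z b /\ a <> RtoC 0 /\ Cmod (Complex.Cdiv b a) < 1.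

Let F : Cpx -> Cpx := fun w => Cadd (h w) (g w).
Let G : Cpx -> Cpx := fun w => Csub (h w) (g w).

Lemma sum_diff_derivatives z : inE z -> exists Fp Gp,
  is_cderiv F z Fp /\ is_cderiv G z Gp /\ Fp <> RtoC 0 /\ 0 < fst (Complex.Cdiv Gp Fp).
Proof.
  intros Hz. destruct (Hsense z Hz) as [a [b [Ha [Hb [Ha0 Hab]]]]].
  destruct (sense_ratio_re_pos a b Ha0 Hab) as [Hs Hr].
  apply cderiv_Cderive in Ha, Hb.
  exists (Cplus a b), (Cminus a b). repeat split; auto; apply Cderive_cderiv.
  - exact (Cderive_plus h g z a b Ha Hb).
  - exact (Cderive_minus h g z a b Ha Hb).
Qed.

Lemma level_curve_im_increasing K : admissible be K ->
  forall x y, x < y -> snd (G (lev_point be K x)) < snd (G (lev_point be K y)).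
Proof.
  intros Hadm. apply locally_increasing_increasing. intro x0.
  assert (Hin : inE (lev_point be K x0)) by (apply inE_Cmod, lev_point_spec; auto).
  destruct (sum_diff_derivatives _ Hin) as [Fp [Gp [HF [HG [HFp HR]]]]].
  apply (vertical_curve_im_increasing F G (lev_point be K) (lev_height be K) ((K + 2*be)/4) x0 Fp Gp); auto.
  - intro x. unfold F. rewrite Hshear by (apply inE_Cmod, lev_point_spec; auto).
    apply lev_point_spec; auto.
  - intros x y. apply lev_height_increasing; auto.
  - apply lev_point_continuous; auto.
Qed.

Lemma level_curve_im_continuous K : admissible be K ->
  forall x, continuity_pt (fun x => snd (G (lev_point be K x))) x.
Proof.
  intros Hadm x eps He.
  assert (Hin : inE (lev_point be K x)) by (apply inE_Cmod, lev_point_spec; auto).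
  destruct (sum_diff_derivatives _ Hin) as [Fp [Gp [_ [HG _]]]].
  destruct (cderiv_continuous G _ _ HG eps He) as [r [Hr Kr]].
  destruct (lev_point_continuous be K x Hbe Hadm r Hr) as [d [Hd Kd]].
  exists d. split; [lra|]. intros y [_ Hy]. change (Rabs (y - x) < d) in Hy.
  change (Rabs (snd (G (lev_point be K y)) - snd (G (lev_point be K x))) < eps).
  eapply Rle_lt_trans; [|exact (Kr _ (Kd y Hy))].
  replace (snd (G (lev_point be K y)) - snd (G (lev_point be K x)))
    with (snd (Cminus (G (lev_point be K y)) (G (lev_point be K x)))) by (simpl; ring).
  apply Rabs_im_le_Cmod.
Qed.

Lemma on_level_curve z1 z : inE z1 -> inE z -> fst (F z) = fst (F z1) ->
  admissible be (4 * fst (F z1) - 2*be) /\ exists x, lev_point be (4 * fst (F z1) - 2*be) x = z.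
Proof.
  intros Hz1 Hz E. apply lev_point_onto; [auto | apply inE_Cmod; auto|].
  unfold F in *. rewrite <- Hshear by auto. rewrite E. field.
Qed.

Lemma shear_harm_injective z w : inE z -> inE w -> harm h g z = harm h g w -> z = w.
Proof.
  intros Hz Hw E. rewrite !harm_components in E. injection E as E1 E2.
  destruct (on_level_curve z z Hz Hz eq_refl) as [Hadm [x1 Hx1]].
  destruct (on_level_curve z w Hz Hw (eq_sym E1)) as [_ [x2 Hx2]].
  pose proof (level_curve_im_increasing _ Hadm) as Hmono.
  destruct (Rtotal_order x1 x2) as [L|[<-|L]]; [| congruence |];
    specialize (Hmono _ _ L); rewrite Hx1, Hx2 in Hmono; unfold G in Hmono; simpl in Hmono; lra.
Qed.

Lemma shear_harm_convex_imag : convex_imag_dir (image_E (harm h g)).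
Proof.
  intros w1 w2 [z1 [Hz1 <-]] [z2 [Hz2 <-]] HRe s Hs.
  rewrite !harm_components in HRe |- *. unfold Re, Im in *. cbn [fst snd] in HRe |- *.
  destruct (on_level_curve z1 z1 Hz1 Hz1 eq_refl) as [Hadm [x1 Hx1]].
  destruct (on_level_curve z1 z2 Hz1 Hz2 (eq_sym HRe)) as [_ [x2 Hx2]].
  set (K := 4 * fst (F z1) - 2 * be) in *.
  set (q := fun x => snd (G (lev_point be K x))).
  set (v := s * snd (G z1) + (1 - s) * snd (G z2)).
  assert (Hq1 : q x1 = snd (G z1)) by (unfold q; rewrite Hx1; reflexivity).
  assert (Hq2 : q x2 = snd (G z2)) by (unfold q; rewrite Hx2; reflexivity).
  assert (Hv : exists x, q x = v).
  { assert (Hmono : forall x y, x < y -> q x < q y) by exact (level_curve_im_increasing K Hadm).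
    destruct (Rtotal_order x1 x2) as [L|[<-|L]];
      [pose proof (Hmono _ _ L) | | pose proof (Hmono _ _ L)].
    - apply (intermediate_value q (level_curve_im_continuous K Hadm) x1 x2); unfold v; nra.
    - exists x1. unfold v. nra.
    - apply (intermediate_value q (level_curve_im_continuous K Hadm) x2 x1); unfold v; nra. }
  destruct Hv as [x Hx].
  assert (Hin : inE (lev_point be K x)) by (apply inE_Cmod, lev_point_spec; auto).
  exists (lev_point be K x). split; [exact Hin|].
  rewrite harm_components. fold (F (lev_point be K x)) (G (lev_point be K x)).
  unfold F. rewrite Hshear by auto. rewrite (proj2 (lev_point_spec be K x Hbe Hadm)).
  change (snd (G (lev_point be K x))) with (q x). rewrite Hx.
  unfold v, K, F, G. apply injective_projections; simpl; [field | reflexivity].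
Qed.

End ShearConstruction.

Lemma shear_in_SH be (h g : Cpx -> Cpx) : -1 <= be <= 1 ->
  (forall z, inE z -> Cadd (h z) (g z) = shear_fun be z) ->
  (forall z, inE z -> exists a b,
     is_cderiv h z a /\ is_cderiv g z b /\ a <> RtoC 0 /\ Cmod (Complex.Cdiv b a) < 1) ->
  harm h g C0 = C0 -> is_cderiv h C0 C1 -> in_SH h g.
Proof.
  intros Hbe Hshear Hsense H0 H1.
  refine (conj _ (conj _ (conj _ (conj _ (conj H0 H1))))).
  - intros z Hz. destruct (Hsense z Hz) as [a [b [Ha _]]]. eauto.
  - intros z Hz. destruct (Hsense z Hz) as [a [b [_ [Hb _]]]]. eauto.
  - exact (shear_harm_injective be h g Hbe Hshear Hsense).
  - intros z a' b' Hz Ha' Hb'. destruct (Hsense z Hz) as [a [b [Ha [Hb [Ha0 Hab]]]]].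
    rewrite (cderiv_unique _ _ _ _ Ha' Ha), (cderiv_unique _ _ _ _ Hb' Hb). to_C. auto.
Qed.

Lemma shear_dilatation_derivative (al : R) (h g om : Cpx -> Cpx) z a b :
  (forall w, inE w -> Cadd (h w) (g w) = shear_fun al w) -> has_dilatation h g om ->
  inE z -> is_cderiv h z a -> is_cderiv g z b ->
  b = Cmult (om z) a /\
  Cmult a (Cplus (RtoC 1) (om z)) = Complex.Cdiv (qpoly al z)
    (Cmult (Cminus (RtoC 1) (Cmult z z)) (Cminus (RtoC 1) (Cmult z z))).
Proof.
  intros Hsum Hdil Hz Ha Hb.
  destruct (Hdil z a b Hz Ha Hb) as [Ha0 Hba]. to_C.
  assert (Hb' : b = Cmult (om z) a) by (rewrite <- Hba; cfield; auto).
  split; auto. rewrite <- (shear_sum_derivative al h g z a b Hsum Hz Ha Hb), Hb'. cring.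
Qed.

(* Convex combinations of shears of shear_fun al1 and shear_fun al2 are shears
   of shear_fun (t al1 + (1-t) al2): the map al |-> shear_fun al z is affine. *)
Lemma combination_shear al1 al2 t (h1 g1 h2 g2 : Cpx -> Cpx) :
  (forall z, inE z -> Cadd (h1 z) (g1 z) = shear_fun al1 z) ->
  (forall z, inE z -> Cadd (h2 z) (g2 z) = shear_fun al2 z) ->
  forall z, inE z ->
    Cadd (Cadd (Cscal t (h1 z)) (Cscal (1 - t) (h2 z))) (Cadd (Cscal t (g1 z)) (Cscal (1 - t) (g2 z)))
    = shear_fun (t*al1 + (1-t)*al2) z.
Proof.
  intros Hsum1 Hsum2 z Hz.
  transitivity (Cplus (Cmult (RtoC t) (Cadd (h1 z) (g1 z))) (Cmult (RtoC (1-t)) (Cadd (h2 z) (g2 z))));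
    [to_C; cring|].
  rewrite Hsum1, Hsum2 by auto. unfold shear_fun. to_C.
  rewrite inE_Cmod in Hz. pose proof (one_minus_sq_neq_0 z Hz). cfield. auto.
Qed.

Lemma combination_sense al1 al2 t (h1 g1 h2 g2 : Cpx -> Cpx) :
  -1 <= al2 -> al2 <= al1 -> al1 <= 1 -> 0 <= t <= 1 ->
  analytic_on_E h1 -> analytic_on_E g1 -> analytic_on_E h2 -> analytic_on_E g2 ->
  (forall z, inE z -> Cadd (h1 z) (g1 z) = shear_fun al1 z) ->
  (forall z, inE z -> Cadd (h2 z) (g2 z) = shear_fun al2 z) ->
  has_dilatation h1 g1 (fun z => Copp z) -> has_dilatation h2 g2 (fun z => z) ->
  forall z, inE z -> exists a b,
    is_cderiv (fun w => Cadd (Cscal t (h1 w)) (Cscal (1 - t) (h2 w))) z a /\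
    is_cderiv (fun w => Cadd (Cscal t (g1 w)) (Cscal (1 - t) (g2 w))) z b /\
    a <> RtoC 0 /\ Cmod (Complex.Cdiv b a) < 1.
Proof.
  intros H1 H2 H3 Ht Ah1 Ag1 Ah2 Ag2 Hsum1 Hsum2 Hd1 Hd2 z Hz.
  destruct (Ah1 z Hz) as [a1 Ha1]. destruct (Ag1 z Hz) as [b1 Hb1].
  destruct (Ah2 z Hz) as [a2 Ha2]. destruct (Ag2 z Hz) as [b2 Hb2].
  destruct (shear_dilatation_derivative _ _ _ _ _ _ _ Hsum1 Hd1 Hz Ha1 Hb1) as [Eb1 Ea1].
  destruct (shear_dilatation_derivative _ _ _ _ _ _ _ Hsum2 Hd2 Hz Ha2 Hb2) as [Eb2 Ea2].
  exists (Cplus (Cmult (RtoC t) a1) (Cmult (RtoC (1-t)) a2)),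
         (Cplus (Cmult (RtoC t) b1) (Cmult (RtoC (1-t)) b2)).
  split; [apply cderiv_lincomb; auto|]. split; [apply cderiv_lincomb; auto|].
  rewrite Eb1, Eb2. rewrite inE_Cmod in Hz. to_C.
  exact (combination_sense_preserving al1 al2 t z a1 a2 H1 H2 H3 Ht Hz Ea1 Ea2).
Qed.

Theorem theorem2p7 (alpha1 alpha2 : R) (h1 g1 h2 g2 : Cpx -> Cpx) :
  -1 <= alpha1 <= 1 -> -1 <= alpha2 <= 1 ->
  in_SH h1 g1 -> in_SH h2 g2 ->
  (forall z, inE z -> Cadd (h1 z) (g1 z) = shear_fun alpha1 z) ->
  (forall z, inE z -> Cadd (h2 z) (g2 z) = shear_fun alpha2 z) ->
  has_dilatation h1 g1 (fun z => Copp z) ->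
  has_dilatation h2 g2 (fun z => z) ->
  alpha1 >= alpha2 ->
  forall t : R, 0 <= t <= 1 ->
    let h := fun z => Cadd (Cscal t (h1 z)) (Cscal (1 - t) (h2 z)) in
    let g := fun z => Cadd (Cscal t (g1 z)) (Cscal (1 - t) (g2 z)) in
    in_SH h g /\ convex_imag_dir (image_E (harm h g)).
Proof.
  intros Hal1 Hal2 [Ah1 [Ag1 [_ [_ [H01 Hd01]]]]] [Ah2 [Ag2 [_ [_ [H02 Hd02]]]]]
    Hsum1 Hsum2 Hdil1 Hdil2 Hge t Ht h g.
  set (be := t*alpha1 + (1-t)*alpha2).
  assert (Hbe : -1 <= be <= 1) by (unfold be; split; nra).
  pose proof (combination_shear _ _ t _ _ _ _ Hsum1 Hsum2) as Hshear.
  pose proof (combination_sense alpha1 alpha2 t h1 g1 h2 g2 ltac:(lra) ltac:(lra) ltac:(lra) Ht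
                Ah1 Ag1 Ah2 Ag2 Hsum1 Hsum2 Hdil1 Hdil2) as Hsense.
  split; [|exact (shear_harm_convex_imag be h g Hbe Hshear Hsense)].
  apply (shear_in_SH be); auto.
  -
    revert H01 H02. unfold harm, h, g. to_C. unfold Cmult, Cplus, Complex.Cconj, RtoC. simpl.
    intros E1 E2. injection E1 as E11 E12. injection E2 as E21 E22.
    apply injective_projections; simpl; nra.
  -
    replace Defs.C1 with (Cplus (Cmult (RtoC t) Defs.C1) (Cmult (RtoC (1-t)) Defs.C1)) by cring.
    apply cderiv_lincomb; auto.
Qed.
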